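(* $\mathrm{Aut}(Q_D,\mathbb Z)\subseteq J_0\,O(3,1;\mathbb Z)\,J_0^{-1}$, where $J_0=\frac12\begin{pmatrix}1&1&1&1\\1&1&-1&-1\\1&-1&1&-1\\1&-1&-1&1\end{pmatrix}$; that is, for every $U\in\mathrm{Aut}(Q_D,\mathbb Z)$ the matrix $J_0^{-1}UJ_0$ has integer entries (and then lies in $O(3,1;\mathbb Z)$).
   Context: Let $Q_D=I-\frac12\mathbf 1\mathbf 1^T$ (where $\mathbf 1=(1,1,1,1)^T$) and $\mathrm{Aut}(Q_D,\mathbb Z)=\{U\in M_4(\mathbb Z): U^TQ_DU=Q_D\}$. Let $Q_L=\mathrm{diag}(-1,1,1,1)$ and $O(3,1;\mathbb Z)=\{U\in M_4(\mathbb Z):U^TQ_LU=Q_L\}$. Note $J_0=J_0^T=J_0^{-1}$. *)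

From mathcomp Require Import all_boot all_order all_algebra.
Set Implicit Arguments. Unset Strict Implicit. Unset Printing Implicit Defensive.
Import GRing.Theory Num.Theory.
Local Open Scope ring_scope.

Definition toQ (U : 'M[int]_4) : 'M[rat]_4 := map_mx (fun z : int => z%:~R) U.

Definition Q_D : 'M[rat]_4 := 1%:M - (1/2 : rat) *: const_mx 1.

Definition Q_L : 'M[rat]_4 :=
  \matrix_(i < 4, j < 4) (if i == j then (if i == 0 :> nat then -1 else 1) else 0).

Definition AutQD (U : 'M[int]_4) : Prop := (toQ U)^T *m Q_D *m toQ U = Q_D.

Definition O31Z (U : 'M[int]_4) : Prop := (toQ U)^T *m Q_L *m toQ U = Q_L.

Definition J0 : 'M[rat]_4 :=
  (1/2 : rat) *: \matrix_(i < 4, j < 4)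
     (if (i == 0 :> nat) || (j == 0 :> nat) || (i == j) then 1 else -1).

From mathcomp Require Import all_boot all_order all_algebra.
From mathcomp Require Import zify.
Set Implicit Arguments.
Unset Strict Implicit.
Unset Printing Implicit Defensive.

Import GRing.Theory Num.Theory.
Local Open Scope ring_scope.

(* With A the integer sign matrix 2 J0 and D = 2 Q_D = 2I - 11^T, the claim is
   that every entry of A U A is divisible by 4.  Reading U^T D U = D on the
   diagonal, and the same for U D U^T = D, shows that every row and column sum
   of U is odd; evaluating the quadratic form of D on the vector of row sums
   gives 2 sum r_i^2 - (sum r_i)^2 = -8, and as odd squares are 1 mod 8 this
   forces 4 | sum r_i.  Since each row of A has an even number of minus signs
   and flipping the sign of a line with odd sum shifts the total by 2 mod 4,
   every entry of A U A is congruent to the total sum of U mod 4. *)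

Section Isometries.
Variables (R : comUnitRingType) (n : nat).
Implicit Types (Q J U : 'M[R]_n).

Lemma invmx_involution J : J *m J = 1%:M -> invmx J = J.
Proof.
move=> JJ; have [Ju _] := mulmx1_unit JJ.
by rewrite -[RHS]mul1mx -(mulVmx Ju) -mulmxA JJ mulmx1.
Qed.

Lemma isometry_tr Q U : Q *m Q = 1%:M -> U^T *m Q *m U = Q -> U *m Q *m U^T = Q.
Proof.
move=> QQ UQU.
have /mulmx1C : (Q *m U^T *m Q) *m U = 1%:M.
  by rewrite -!mulmxA (mulmxA U^T) UQU QQ.
rewrite !mulmxA => UQUQ.
by rewrite -[LHS]mulmx1 -QQ !mulmxA UQUQ mul1mx.
Qed.

Lemma isometry_conj J Q Q' U :
  J *m J = 1%:M -> J^T = J -> J *m Q *m J = Q' ->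
  U^T *m Q *m U = Q -> (J *m U *m J)^T *m Q' *m (J *m U *m J) = Q'.
Proof.
move=> JJ JT JQJ UQU.
have JQ'J : J *m Q' *m J = Q by rewrite -JQJ !mulmxA JJ mul1mx -mulmxA JJ mulmx1.
rewrite !trmx_mul JT.
transitivity (J *m (U^T *m (J *m Q' *m J) *m U) *m J); first by rewrite !mulmxA.
by rewrite JQ'J UQU JQJ.
Qed.

End Isometries.

Lemma trmx_mulmx_diag (R : pzRingType) m n (A : 'M[R]_(m, n)) (B : 'M[R]_m) j :
  (A^T *m B *m A) j j = ((col j A)^T *m B *m col j A) 0 0.
Proof.
rewrite !mxE; apply/eq_bigr => k _; rewrite !mxE; congr (_ * _).
by apply/eq_bigr => l _; rewrite !mxE.
Qed.

Definition twoQD n : 'M[int]_n := 2%:M - const_mx 1.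

Lemma twoQD_form n (v : 'cV[int]_n) :
  (v^T *m twoQD n *m v) 0 0 = 2 * \sum_k v k 0 ^+ 2 - (\sum_k v k 0) ^+ 2.
Proof.
rewrite /twoQD mulmxBr mulmxBl mul_mx_scalar -scalemxAl !mxE.
congr (_ * _ - _); first by apply/eq_bigr => k _; rewrite mxE expr2.
rewrite expr2 mulr_suml; apply/eq_bigr => k _; rewrite mulrC mxE.
by congr (_ * _); apply/eq_bigr => j _; rewrite !mxE mulr1.
Qed.

Lemma odd_of_double_sub_sqr (x s : int) : 2 * x - s ^+ 2 = 1 -> ~~ (2 %| s)%Z.
Proof. by move=> H; apply/negP => /dvdzP [q Hq]; move: H; rewrite Hq; nia. Qed.

Section TwoQDIsometry.
Variables (n : nat) (U : 'M[int]_n).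
Hypothesis UQU : U^T *m twoQD n *m U = twoQD n.

Lemma twoQD_isometry_colsum_odd j : ~~ (2 %| \sum_i U i j)%Z.
Proof.
apply: (@odd_of_double_sub_sqr (\sum_i U i j ^+ 2)).
have := twoQD_form (col j U); rewrite -trmx_mulmx_diag UQU /twoQD !mxE eqxx /=.
under eq_bigr do rewrite mxE; under [in X in _ - X ^+ 2]eq_bigr do rewrite mxE.
by move <-.
Qed.

(* The vector of row sums is U 1, and (U 1)^T D (U 1) = 1^T D 1. *)
Lemma twoQD_isometry_rowsums :
  2 * \sum_i (\sum_j U i j) ^+ 2 - (\sum_i \sum_j U i j) ^+ 2 = 2 * n%:R - n%:R ^+ 2.
Proof.
pose ones : 'cV[int]_n := const_mx 1.
have rowsums i : (U *m ones) i 0 = \sum_j U i j.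
  by rewrite mxE; apply/eq_bigr => j _; rewrite mxE mulr1.
have := twoQD_form (U *m ones).
rewrite trmx_mul -!mulmxA (mulmxA U^T) (mulmxA _ U) UQU mulmxA twoQD_form.
move=> ones_form.
under eq_bigr do rewrite -rowsums; under [in X in _ - X ^+ 2]eq_bigr do rewrite -rowsums.
rewrite -ones_form; under eq_bigr do rewrite mxE expr1n; under [in X in _ - X ^+ 2]eq_bigr do rewrite mxE.
by rewrite !sumr_const card_ord.
Qed.
End TwoQDIsometry.

Definition o0 : 'I_4 := @Ordinal 4 0 isT.
Definition o1 : 'I_4 := @Ordinal 4 1 isT.
Definition o2 : 'I_4 := @Ordinal 4 2 isT.
Definition o3 : 'I_4 := @Ordinal 4 3 isT.

Lemma sum4 (R : nmodType) (F : 'I_4 -> R) : \sum_i F i = F o0 + F o1 + F o2 + F o3.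
Proof.
rewrite !big_ord_recr big_ord0 /= add0r.
by congr (_ + _ + _ + _); congr F; apply/val_inj.
Qed.

Lemma ord4P (P : 'I_4 -> Prop) : P o0 -> P o1 -> P o2 -> P o3 -> forall i, P i.
Proof.
move=> H0 H1 H2 H3 [[|[|[|[|k]]]] Hk] //.
- by rewrite (_ : Ordinal Hk = o0) //; apply/val_inj.
- by rewrite (_ : Ordinal Hk = o1) //; apply/val_inj.
- by rewrite (_ : Ordinal Hk = o2) //; apply/val_inj.
- by rewrite (_ : Ordinal Hk = o3) //; apply/val_inj.
Qed.

Lemma dvd2z_sqr (x : int) : (2 %| x ^+ 2)%Z = (2 %| x)%Z.
Proof. by rewrite !dvdzE abszX Euclid_dvdX ?andbT. Qed.

Lemma not_dvd2z_odd (a : int) : ~~ (2 %| a)%Z -> exists p, a = 2 * p + 1.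
Proof. by move=> Ha; exists (a %/ 2)%Z; lia. Qed.

Lemma odd4_sum_div4 (a : 'I_4 -> int) :
  (forall i, ~~ (2 %| a i)%Z) -> 2 * \sum_i a i ^+ 2 - (\sum_i a i) ^+ 2 = -8 ->
  (4 %| \sum_i a i)%Z.
Proof.
move=> odda; rewrite !sum4.
move: (odda o0) (odda o1) (odda o2) (odda o3).
move=> /not_dvd2z_odd [p ->] /not_dvd2z_odd [q ->] /not_dvd2z_odd [r ->] /not_dvd2z_odd [s ->] H.
have /dvdzP [k Hk] : (2 %| p + q + r + s + 2)%Z.
  rewrite -dvd2z_sqr; apply/dvdzP.
  by exists (p * p + p + q * q + q + r * r + r + s * s + s + 2); lia.
by apply/dvdzP; exists k; lia.
Qed.

Definition twoJ0 : 'M[int]_4 :=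
  \matrix_(i < 4, j < 4) (if (i == 0 :> nat) || (j == 0 :> nat) || (i == j) then 1 else -1).

Lemma twoJ0_conj_dvd4 (U : 'M[int]_4) :
  (forall i, ~~ (2 %| \sum_j U i j)%Z) -> (forall j, ~~ (2 %| \sum_i U i j)%Z) ->
  (4 %| \sum_i \sum_j U i j)%Z -> forall i j, (4 %| (twoJ0 *m U *m twoJ0) i j)%Z.
Proof.
move=> oddr oddc.
move: (oddr o0) (oddr o1) (oddr o2) (oddr o3) (oddc o0) (oddc o1) (oddc o2) (oddc o3).
rewrite !sum4 /twoJ0 => r0 r1 r2 r3 c0 c1 c2 c3 tot.
by apply: ord4P; apply: ord4P; do 3 rewrite ?mxE ?sum4 /=; lia.
Qed.

Lemma toQM (A B : 'M[int]_4) : toQ (A *m B) = toQ A *m toQ B.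
Proof. by rewrite /toQ map_mxM. Qed.

Lemma toQT (A : 'M[int]_4) : toQ A^T = (toQ A)^T.
Proof. by rewrite /toQ map_trmx. Qed.

Lemma toQ_inj : injective toQ.
Proof.
move=> A B /matrixP AB; apply/matrixP => i j.
by move: (AB i j); rewrite !mxE; apply: intr_inj.
Qed.

Ltac mx4_compute :=
  apply/matrixP; apply: ord4P; apply: ord4P; rewrite !mxE ?sum4 ?mxE ?sum4 ?mxE /=;
  by apply/eqP; vm_compute.

Lemma Q_D_involutive : Q_D *m Q_D = 1%:M.
Proof. rewrite /Q_D; mx4_compute. Qed.

Lemma J0_involutive : J0 *m J0 = 1%:M.
Proof. rewrite /J0; mx4_compute. Qed.

Lemma tr_J0 : J0^T = J0.
Proof. rewrite /J0; mx4_compute. Qed.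

Lemma J0_Q_D_J0 : J0 *m Q_D *m J0 = Q_L.
Proof. rewrite /J0 /Q_D /Q_L; mx4_compute. Qed.

Lemma toQ_twoQD : toQ (twoQD 4) = 2 *: Q_D.
Proof. rewrite /toQ /twoQD /Q_D; mx4_compute. Qed.

Lemma toQ_twoJ0 : toQ twoJ0 = 2 *: J0.
Proof. rewrite /toQ /twoJ0 /J0; mx4_compute. Qed.

Lemma AutQD_twoQD (U : 'M[int]_4) :
  AutQD U -> U^T *m twoQD 4 *m U = twoQD 4 /\ U *m twoQD 4 *m U^T = twoQD 4.
Proof.
move=> UQU; have UQUt := isometry_tr Q_D_involutive UQU.
by split; apply: toQ_inj; rewrite !toQM toQT toQ_twoQD -scalemxAr -scalemxAl ?UQU ?UQUt.
Qed.

Lemma toQ_J0_conj (U : 'M[int]_4) :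
  (forall i j, (4 %| (twoJ0 *m U *m twoJ0) i j)%Z) ->
  toQ (\matrix_(i, j) ((twoJ0 *m U *m twoJ0) i j %/ 4)%Z) = J0 *m toQ U *m J0.
Proof.
move=> dvd4; set X := twoJ0 *m U *m twoJ0 in dvd4 *.
have toQX : toQ X = 4 *: (J0 *m toQ U *m J0).
  rewrite /X !toQM toQ_twoJ0 -scalemxAl -scalemxAr -scalemxAl scalerA.
  by congr (_ *: _); apply/eqP; vm_compute.
clearbody X; apply/matrixP => i j; apply: (@mulfI _ 4) => //.
move/matrixP/(_ i j): toQX; rewrite !mxE -{1}(divzK (dvd4 i j)) intrM mulrC.
by move=> ->.
Qed.

Theorem lemma7p2 (U : 'M[int]_4) :
  AutQD U ->
  exists V : 'M[int]_4, O31Z V /\ invmx J0 *m toQ U *m J0 = toQ V.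
Proof.
move=> UQU; have [colQU rowQU] := AutQD_twoQD UQU.
have rowsum_odd i : ~~ (2 %| \sum_j U i j)%Z.
  have rowQU' : U^T^T *m twoQD 4 *m U^T = twoQD 4 by rewrite trmxK.
  by have := twoQD_isometry_colsum_odd rowQU' i; under eq_bigr do rewrite mxE.
have sum_div4 : (4 %| \sum_i \sum_j U i j)%Z.
  by apply: odd4_sum_div4 => //; rewrite twoQD_isometry_rowsums.
have dvd4 := twoJ0_conj_dvd4 rowsum_odd (twoQD_isometry_colsum_odd colQU) sum_div4.
exists (\matrix_(i, j) ((twoJ0 *m U *m twoJ0) i j %/ 4)%Z).
rewrite /O31Z toQ_J0_conj // invmx_involution ?J0_involutive //; split => //.
exact: isometry_conj J0_involutive tr_J0 J0_Q_D_J0 UQU.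
Qed.
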